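(* Let $\mathcal{B}\in\mathbb{Z}^{n\times 2}$ have rank $2$ with rows $b_1,\dots,b_n$ summing to zero, and let $I_{\mathcal{B}}$ and $I$ be its lattice ideal and lattice basis ideal. Define $\alpha\in\mathbb{N}^n$ by $\alpha_i=\max_j\nu_{ij}$ if $b_{i1}>0$ and $\alpha_i=0$ otherwise. Then $\partial^{\alpha}I_{\mathcal{B}}\subseteq I$.
   Context: Work in the polynomial ring $\mathbb{C}[\partial_1,\dots,\partial_n]$. $\mathcal{B}=(b_{ji})$ with columns $b^{(1)},b^{(2)}$ and $L_{\mathcal{B}}=\mathcal{B}\mathbb{Z}^2$. For $u\in\mathbb{Z}^n$, $u=u_+-u_-$ with $u_\pm\in\mathbb{N}^n$ of disjoint supports. Lattice ideal: $I_{\mathcal{B}}=\langle\partial^{u_+}-\partial^{u_-}:u\in L_{\mathcal{B}}\rangle$. Lattice basis ideal: $I=\langle\partial^{b^{(1)}_+}-\partial^{b^{(1)}_-},\partial^{b^{(2)}_+}-\partial^{b^{(2)}_-}\rangle$. Index: $\nu_{ij}=\min(|b_{i1}b_{j2}|,|b_{j1}b_{i2}|)$ if $b_i,b_j$ lie in the interiors of opposite quadrants of $\mathbb{Z}^2$, and $0$ otherwise. *)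

From HB Require Import structures.
From mathcomp Require Import all_boot all_algebra.
From mathcomp Require Import Rstruct complex.
From mathcomp Require Export mpoly.
Set Implicit Arguments. Unset Strict Implicit. Unset Printing Implicit Defensive.
Import GRing.Theory Num.Theory.
Local Open Scope ring_scope.

Definition CC : fieldType := complex Rdefinitions.R.

Definition pospart (z : int) : nat := match z with Posz k => k | Negz _ => 0%N end.
Definition negpart (z : int) : nat := pospart (- z).

Definition uplus n (u : 'cV[int]_n) : 'X_{1..n} := [multinom pospart (u i ord0) | i < n].
Definition uminus n (u : 'cV[int]_n) : 'X_{1..n} := [multinom negpart (u i ord0) | i < n].

(* The binomial d^{u_+} - d^{u_-}. *)
Definition binom_of n (u : 'cV[int]_n) : {mpoly CC[n]} := 'X_[uplus u] - 'X_[uminus u].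

Definition in_ideal n (G : {mpoly CC[n]} -> Prop) (p : {mpoly CC[n]}) : Prop :=
  exists s : seq ({mpoly CC[n]} * {mpoly CC[n]}),
    (forall x, x \in s -> G x.2) /\ p = \sum_(x <- s) x.1 * x.2.

Definition in_lattice n (B : 'M[int]_(n, 2)) (u : 'cV[int]_n) : Prop :=
  exists v : 'cV[int]_2, u = B *m v.

Definition lattice_ideal n (B : 'M[int]_(n, 2)) : {mpoly CC[n]} -> Prop :=
  in_ideal (fun g => exists u, in_lattice B u /\ g = binom_of u).

Definition lattice_basis_ideal n (B : 'M[int]_(n, 2)) : {mpoly CC[n]} -> Prop :=
  in_ideal (fun g => g = binom_of (col ord0 B) \/ g = binom_of (col (@Ordinal 2 1 isT) B)).

Definition opposite_open_quadrants n (B : 'M[int]_(n, 2)) (i j : 'I_n) : bool :=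
  [&& B i ord0 != 0, B i (@Ordinal 2 1 isT) != 0,
      sgz (B j ord0) == - sgz (B i ord0) & sgz (B j (@Ordinal 2 1 isT)) == - sgz (B i (@Ordinal 2 1 isT))].

Definition nu n (B : 'M[int]_(n, 2)) (i j : 'I_n) : nat :=
  if opposite_open_quadrants B i j
  then minn (absz (B i ord0 * B j (@Ordinal 2 1 isT))) (absz (B j ord0 * B i (@Ordinal 2 1 isT)))
  else 0%N.

Definition alpha n (B : 'M[int]_(n, 2)) : 'X_{1..n} :=
  [multinom (if (0 < B i ord0)%R then \max_(j < n) nu B i j else 0%N) | i < n].

From mathcomp Require Import all_boot all_order all_algebra.
From mathcomp Require Import zify ring.
Import Order.TTheory GRing.Theory Num.Theory.
Set Implicit Arguments. Unset Strict Implicit. Unset Printing Implicit Defensive.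
Local Open Scope ring_scope.

(* Write u in L_B as u = p b^(1) + q (s b^(2)) with p, q in N and s = +-1
   (after possibly replacing u by -u).  Walk from (0,0) to (p,q) in unit steps,
   moving through the exponents z(x,y) = alpha + u_- + x b^(1) + y s b^(2), so
   that z(0,0) = alpha + u_- and z(p,q) = alpha + u_+.  Whenever two consecutive
   exponents are in N^n, their monomials differ by a monomial multiple of a
   generator of I.  A step that leaves N^n in coordinate i forces b_i into
   an open quadrant; if both the right and the up step were blocked, the two
   blocking rows would lie in opposite open quadrants, and alpha_k >= nu_kl
   makes that impossible.  So a path inside N^n always exists. *)

Local Notation o1 := (@Ordinal 2 1 isT).

Section IdealClosure.

Variables (n : nat) (G : {mpoly CC[n]} -> Prop).

Lemma in_ideal0 : in_ideal G 0.
Proof. by exists [::]; split => //; rewrite big_nil. Qed.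

Lemma in_idealD p q : in_ideal G p -> in_ideal G q -> in_ideal G (p + q).
Proof.
move=> [s [Hs ->]] [t [Ht ->]]; exists (s ++ t); split; last by rewrite big_cat.
by move=> x; rewrite mem_cat => /orP [] ?; [apply: Hs | apply: Ht].
Qed.

Lemma in_idealMl r p : in_ideal G p -> in_ideal G (r * p).
Proof.
move=> [s [Hs ->]]; exists [seq (r * x.1, x.2) | x <- s]; split.
  by move=> x /mapP [y Hy ->]; exact: (Hs _ Hy).
by rewrite big_map mulr_sumr; apply: eq_bigr => x _; rewrite mulrA.
Qed.

Lemma in_idealN p : in_ideal G p -> in_ideal G (- p).
Proof. by move=> Hp; rewrite -mulN1r; apply: in_idealMl. Qed.

Lemma in_ideal_gen r g : G g -> in_ideal G (r * g).
Proof.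
move=> Hg; exists [:: (r, g)]; split; last by rewrite big_seq1.
by move=> x; rewrite inE => /eqP ->.
Qed.

End IdealClosure.

Lemma in_ideal_mul_gens n (G H : {mpoly CC[n]} -> Prop) m f :
  (forall g, G g -> in_ideal H (m * g)) -> in_ideal G f -> in_ideal H (m * f).
Proof.
move=> HG [s [Hs ->]]; rewrite mulr_sumr big_seq.
apply: (big_ind (in_ideal H)); [exact: in_ideal0 | exact: in_idealD |].
by move=> x /Hs /HG Hx; rewrite mulrCA; apply: in_idealMl.
Qed.

Lemma pospart_sub_negpart (z : int) : (pospart z)%:Z - (negpart z)%:Z = z.
Proof. by case: z => [[|m]|m]; rewrite /negpart //= ?subr0 ?sub0r. Qed.

Lemma pospart_negpart0 (z : int) : pospart z = 0%N \/ negpart z = 0%N.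
Proof. by case: z => [[|m]|m]; [left | right | left]. Qed.

Lemma uplusN n (u : 'cV[int]_n) : uplus (- u) = uminus u.
Proof. by apply/mnmP => i; rewrite !mnmE mxE. Qed.

Lemma uminusN n (u : 'cV[int]_n) : uminus (- u) = uplus u.
Proof. by apply/mnmP => i; rewrite !mnmE mxE /negpart opprK. Qed.

Lemma binom_ofN n (u : 'cV[int]_n) : binom_of (- u) = - binom_of u.
Proof. by rewrite /binom_of uplusN uminusN opprB. Qed.

Lemma int_sign_decomp (b : int) : exists2 s : int, s = 1 \/ s = -1 & b = s * (absz b)%:Z.
Proof.
have [b_ge0 | b_lt0] := lerP 0 b.
  by exists 1; [left | rewrite mul1r abszE ger0_norm].
by exists (-1); [right | rewrite mulN1r abszE ltr0_norm ?opprK].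
Qed.

Definition monz n (z : 'I_n -> int) : {mpoly CC[n]} := 'X_[[multinom absz (z i) | i < n]].

Lemma lattice_basis_ideal_step n (B : 'M[int]_(n, 2)) (k : 'I_2) (z z' : 'I_n -> int) :
  (forall i, 0 <= z i) -> (forall i, 0 <= z' i) -> (forall i, z' i = z i + B i k) ->
  lattice_basis_ideal B (monz z' - monz z).
Proof.
move=> z_ge0 z'_ge0 z'E.
set m := [multinom (absz (z i) - negpart (B i k))%N | i < n].
have exponentE (i : 'I_n) :
    [/\ absz (z' i) = (m i + pospart (B i k))%N & absz (z i) = (m i + negpart (B i k))%N].
  have := z_ge0 i; have := z'_ge0 i; rewrite z'E mnmE.
  have := pospart_sub_negpart (B i k); have := pospart_negpart0 (B i k); lia.
have -> : monz z' = 'X_[m + uplus (col k B)].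
  by congr 'X_[_]; apply/mnmP => i; rewrite mnmDE [uplus _ i]mnmE mxE mnmE; case: (exponentE i).
have -> : monz z = 'X_[m + uminus (col k B)].
  by congr 'X_[_]; apply/mnmP => i; rewrite mnmDE [uminus _ i]mnmE mxE mnmE; case: (exponentE i).
rewrite !mpolyXD -mulrBr; apply: in_ideal_gen.
clear m z'E exponentE; case: k => [[|[|k]] k_lt2] //.
  by left; congr (binom_of (col _ B)); apply: val_inj.
by right; congr (binom_of (col _ B)); apply: val_inj.
Qed.

Lemma lattice_basis_ideal_signed_step n (B : 'M[int]_(n, 2)) (k : 'I_2) (s : int)
    (z z' : 'I_n -> int) : s = 1 \/ s = -1 ->
  (forall i, 0 <= z i) -> (forall i, 0 <= z' i) -> (forall i, z' i = z i + s * B i k) ->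
  lattice_basis_ideal B (monz z' - monz z).
Proof.
move=> [->|->] z_ge0 z'_ge0 z'E.
  by apply: (@lattice_basis_ideal_step _ _ k) => // i; rewrite z'E mul1r.
rewrite -opprB; apply: in_idealN; apply: (@lattice_basis_ideal_step _ _ k) => // i.
by rewrite z'E mulN1r subrK.
Qed.

(* A coordinate that is >= 0 at (x,y) and at the corner (p,q) but < 0 at
   (x+1,y) is affine in (x,y), so it must decrease in x and increase in y. *)
Lemma blocked_step_signs (c a d x y p q : int) :
  0 <= c + a * p + d * q -> x < p -> 0 <= y -> y <= q ->
  0 <= c + a * x + d * y -> c + a * (x + 1) + d * y < 0 -> [/\ a < 0, 0 < d & y < q].
Proof.
move=> corner_ge0 x_lt_p y_ge0 y_le_q xy_ge0 right_lt0.
have a_lt0 : a < 0 by lia.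
have ap_le : a * p <= a * (x + 1) by nia.
have d_gt0 : 0 < d.
  have [d_le0|//] := lerP d 0.
  have : d * q <= d * y by nia.
  lia.
split => //; have [q_le_y|//] := lerP q y.
have y_eq_q : y = q by lia.
lia.
Qed.

(* Rows k and l block the up and the right step at (x,y).  Split on the sign of
   the minor a_k d_l - a_l d_k and combine the two blocking inequalities so that
   only a multiple of the minor survives, with (x,y) measured from the origin in
   the first case and from the corner (p,q) in the second; the bound
   alpha_k >= min(a_k d_l, a_l d_k) makes the combination negative. *)
Lemma blocked_steps_absurd (ak al dk dl x y p q alphak alphal mk ml : int) :
  0 < ak -> al < 0 -> dk < 0 -> 0 < dl -> 0 <= x -> x < p -> 0 <= y -> y < q ->
  0 <= alphal -> 0 <= mk -> - (ak * p + dk * q) <= mk ->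
  0 <= ml -> - (al * p + dl * q) <= ml ->
  ak * dl <= alphak \/ al * dk <= alphak ->
  alphak + mk + ak * x + dk * (y + 1) < 0 -> alphal + ml + al * (x + 1) + dl * y < 0 -> False.
Proof.
move=> ak_gt0 al_lt0 dk_lt0 dl_gt0 x_ge0 x_lt_p y_ge0 y_lt_q alphal_ge0
  mk_ge0 mk_ge ml_ge0 ml_ge alphak_ge k_blocked l_blocked.
have [minor_le|minor_gt] := lerP (al * dk) (ak * dl).
- have alphak_ge' : al * dk <= alphak by case: alphak_ge; lia.
  have comb : dl * (ak * x + dk * y) - dk * (al * x + dl * y) = (ak * dl - al * dk) * x by ring.
  have comb_bound : 0 <= (ak * dl - al * dk) * x by nia.
  have k_bound : dl * (ak * x + dk * y) <= dl * (- alphak - dk - 1) by nia.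
  have l_bound : - dk * (al * x + dl * y) <= - dk * (- al - 1) by nia.
  have alphak_bound : dl * alphak >= dl * (al * dk) by nia.
  have slack_ge0 : 0 <= (- dk) * ((- al - 1) * (dl - 1)).
    by apply: mulr_ge0; [lia | apply: mulr_ge0; lia].
  lia.
- have alphak_ge' : ak * dl <= alphak by case: alphak_ge; lia.
  have comb : - al * (ak * (x - p) + dk * (y - q)) + ak * (al * (x - p) + dl * (y - q))
           = (al * dk - ak * dl) * (q - y) by ring.
  have comb_bound : al * dk - ak * dl <= (al * dk - ak * dl) * (q - y) by nia.
  have k_bound : - al * (ak * (x - p) + dk * (y - q)) <= - al * (- alphak - dk - 1) by nia.
  have l_bound : ak * (al * (x - p) + dl * (y - q)) <= ak * (- al - 1) by nia.
  have alphak_bound : al * alphak <= al * (ak * dl) by nia.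
  have slack_ge0 : 0 <= ak * ((- al - 1) * (dl - 1)).
    by apply: mulr_ge0; [lia | apply: mulr_ge0; lia].
  lia.
Qed.

Lemma alpha_ge_opposite n (B : 'M[int]_(n, 2)) (s : int) (k l : 'I_n) : s = 1 \/ s = -1 ->
  0 < B k ord0 -> B l ord0 < 0 -> s * B k o1 < 0 -> 0 < s * B l o1 ->
  B k ord0 * (s * B l o1) <= (alpha B k)%:Z \/ B l ord0 * (s * B k o1) <= (alpha B k)%:Z.
Proof.
move=> s_sign k0_gt0 l0_lt0 k1_lt0 l1_gt0.
have nu_le : (nu B k l <= alpha B k)%N by rewrite /alpha mnmE k0_gt0; apply: leq_bigmax.
have col1_signs : (B k o1 < 0 /\ 0 < B l o1) \/ (0 < B k o1 /\ B l o1 < 0).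
  by case: s_sign => s_def; subst s; [left | right]; lia.
have opposite : opposite_open_quadrants B k l.
  apply/and4P; split.
  - by rewrite (gt_eqF k0_gt0).
  - by case: col1_signs => [[h _]|[h _]]; [rewrite (lt_eqF h) | rewrite (gt_eqF h)].
  - by rewrite (ltr0_sgz l0_lt0) (gtr0_sgz k0_gt0).
  - by case: col1_signs => [[h h']|[h h']];
      rewrite ?(ltr0_sgz h) ?(gtr0_sgz h) ?(ltr0_sgz h') ?(gtr0_sgz h').
move: nu_le; rewrite /nu opposite.
by case: s_sign => s_def; subst s; rewrite ?mul1r ?mulN1r; lia.
Qed.

Section LatticePath.

Variables (n : nat) (B : 'M[int]_(n, 2)) (s : int) (U : 'cV[int]_n) (p q : nat).
Hypothesis s_sign : s = 1 \/ s = -1.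
Hypothesis UE : forall i, U i ord0 = p%:Z * B i ord0 + q%:Z * (s * B i o1).

Definition path_exponent (x y : nat) (i : 'I_n) : int :=
  (alpha B i + negpart (U i ord0))%:Z + x%:Z * B i ord0 + y%:Z * (s * B i o1).

Local Notation z := path_exponent.

Lemma path_exponent_corner i : z p q i = (alpha B i + pospart (U i ord0))%:Z.
Proof. by rewrite /path_exponent; have := UE i; have := pospart_sub_negpart (U i ord0); lia. Qed.

Lemma right_step_blocker x y l : (x < p)%N -> (y <= q)%N ->
  0 <= z x y l -> z x.+1 y l < 0 -> [/\ B l ord0 < 0, 0 < s * B l o1 & (y < q)%N].
Proof.
move=> x_lt_p y_le_q zl_ge0 zl_lt0; have := path_exponent_corner l.
move: zl_ge0 zl_lt0; rewrite /path_exponent => zl_ge0 zl_lt0 corner.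
have [] := @blocked_step_signs (alpha B l + negpart (U l ord0))%:Z (B l ord0)
  (s * B l o1) x y p q; try lia.
by move=> ? ? ?; split => //; lia.
Qed.

Lemma up_step_blocker x y k : (y < q)%N -> (x <= p)%N ->
  0 <= z x y k -> z x y.+1 k < 0 -> [/\ s * B k o1 < 0, 0 < B k ord0 & (x < p)%N].
Proof.
move=> y_lt_q x_le_p zk_ge0 zk_lt0; have := path_exponent_corner k.
move: zk_ge0 zk_lt0; rewrite /path_exponent => zk_ge0 zk_lt0 corner.
have [] := @blocked_step_signs (alpha B k + negpart (U k ord0))%:Z (s * B k o1)
  (B k ord0) y x q p; try lia.
by move=> ? ? ?; split => //; lia.
Qed.

Lemma path_extends x y : (x <= p)%N -> (y <= q)%N -> (x < p)%N || (y < q)%N ->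
    (forall i, 0 <= z x y i) ->
  ((x < p)%N /\ forall i, 0 <= z x.+1 y i) \/ ((y < q)%N /\ forall i, 0 <= z x y.+1 i).
Proof.
move=> x_le_p y_le_q not_corner z_ge0.
have [/andP[x_lt_p /forallP right_ok]|right_bad] :=
  boolP ((x < p)%N && [forall i, 0 <= z x.+1 y i]); first by left.
have [/andP[y_lt_q /forallP up_ok]|up_bad] :=
  boolP ((y < q)%N && [forall i, 0 <= z x y.+1 i]); first by right.
exfalso.
have right_blocked : (x < p)%N -> exists2 l, z x.+1 y l < 0 &
    [/\ B l ord0 < 0, 0 < s * B l o1 & (y < q)%N].
  move=> x_lt_p; move: right_bad; rewrite x_lt_p /= negb_forall => /existsP [l].
  rewrite -ltNge => zl_lt0; exists l => //.
  exact: right_step_blocker x_lt_p y_le_q (z_ge0 l) zl_lt0.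
have up_blocked : (y < q)%N -> exists2 k, z x y.+1 k < 0 &
    [/\ s * B k o1 < 0, 0 < B k ord0 & (x < p)%N].
  move=> y_lt_q; move: up_bad; rewrite y_lt_q /= negb_forall => /existsP [k].
  rewrite -ltNge => zk_lt0; exists k => //.
  exact: up_step_blocker y_lt_q x_le_p (z_ge0 k) zk_lt0.
have x_lt_p : (x < p)%N.
  have [//|p_le_x] := ltnP x p.
  have y_lt_q : (y < q)%N by move: not_corner; rewrite ltnNge p_le_x.
  by have [k _ [_ _]] := up_blocked y_lt_q; rewrite ltnNge p_le_x.
have [l zl_lt0 [l0_lt0 l1_gt0 y_lt_q]] := right_blocked x_lt_p.
have [k zk_lt0 [k1_lt0 k0_gt0 _]] := up_blocked y_lt_q.
have alphak_ge := alpha_ge_opposite s_sign k0_gt0 l0_lt0 k1_lt0 l1_gt0.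
have := path_exponent_corner k; have := path_exponent_corner l.
have := pospart_sub_negpart (U k ord0); have := pospart_sub_negpart (U l ord0).
have := UE k; have := UE l; move: zk_lt0 zl_lt0; rewrite /path_exponent => *.
apply: (@blocked_steps_absurd (B k ord0) (B l ord0) (s * B k o1) (s * B l o1) x y p q
  (alpha B k) (alpha B l) (negpart (U k ord0)) (negpart (U l ord0)));
  first [exact: alphak_ge | lia].
Qed.

Lemma path_to_corner x y : (x <= p)%N -> (y <= q)%N -> (forall i, 0 <= z x y i) ->
  lattice_basis_ideal B (monz (z p q) - monz (z x y)).
Proof.
move: {2}(p - x + (q - y))%N (erefl (p - x + (q - y))%N) => d.
elim: d x y => [|d IH] x y dist x_le_p y_le_q z_ge0.
  have -> : x = p by lia.
  have -> : y = q by lia.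
  by rewrite subrr; apply: in_ideal0.
have not_corner : (x < p)%N || (y < q)%N by lia.
have through w : lattice_basis_ideal B (monz (z p q) - monz w) ->
    lattice_basis_ideal B (monz w - monz (z x y)) ->
    lattice_basis_ideal B (monz (z p q) - monz (z x y)).
  by move=> Hw1 Hw2; rewrite -(subrK (monz w) (monz (z p q))) -addrA; apply: in_idealD.
have [[x_lt_p z'_ge0]|[y_lt_q z'_ge0]] := path_extends x_le_p y_le_q not_corner z_ge0.
- apply: (through _ (IH _ _ _ x_lt_p y_le_q z'_ge0)); first lia.
  apply: (@lattice_basis_ideal_signed_step _ _ ord0 1) => // [|i]; first by left.
  by rewrite /path_exponent; lia.
- apply: (through _ (IH _ _ _ x_le_p y_lt_q z'_ge0)); first lia.
  apply: (@lattice_basis_ideal_signed_step _ _ o1 s) => // i.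
  by rewrite /path_exponent; lia.
Qed.

Lemma alpha_mul_binom_in_basis_ideal : lattice_basis_ideal B ('X_[alpha B] * binom_of U).
Proof.
have origin_ge0 i : 0 <= z 0 0 i by rewrite /path_exponent; lia.
have := path_to_corner (leq0n p) (leq0n q) origin_ge0.
rewrite /binom_of mulrBr -!mpolyXD /monz.
congr (lattice_basis_ideal B (_ - _)); congr 'X_[_]; apply/mnmP => i.
  by rewrite mnmDE [uplus _ _]mnmE [LHS]mnmE path_exponent_corner.
by rewrite mnmDE [uminus _ _]mnmE [LHS]mnmE /path_exponent; lia.
Qed.

End LatticePath.

Lemma lattice_point_in_basis_ideal n (B : 'M[int]_(n, 2)) (u : 'cV[int]_n) :
  in_lattice B u -> lattice_basis_ideal B ('X_[alpha B] * binom_of u).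
Proof.
move=> [v ->].
wlog v0_ge0 : v / 0 <= v ord0 ord0.
  move=> wlog_v; have [|v0_lt0] := lerP 0 (v ord0 ord0); first exact: wlog_v.
  rewrite -[v]opprK mulmxN binom_ofN mulrN; apply/in_idealN/wlog_v.
  by rewrite mxE oppr_ge0 ltW.
have [s s_sign v1E] := int_sign_decomp (v o1 ord0).
apply: (@alpha_mul_binom_in_basis_ideal _ _ s _ (absz (v ord0 ord0)) (absz (v o1 ord0))
  s_sign).
move=> i; rewrite mxE big_ord_recl big_ord1.
have -> : lift ord0 ord0 = o1 :> 'I_2 by apply: val_inj.
have v0E : (absz (v ord0 ord0))%:Z = v ord0 ord0 by rewrite abszE ger0_norm.
by rewrite v0E [X in B i o1 * X]v1E; ring.
Qed.

Theorem proposition4p4 (n : nat) (B : 'M[int]_(n, 2)) :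
  \rank (map_mx (intr : int -> rat) B) = 2%N ->
  \sum_(i < n) row i B = 0 ->
  forall f : {mpoly CC[n]}, lattice_ideal B f ->
    lattice_basis_ideal B ('X_[alpha B] * f).
Proof.
move=> _ _ f; apply: in_ideal_mul_gens => _ [u [u_lattice ->]].
exact: lattice_point_in_basis_ideal.
Qed.
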